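(* Let $n \ge 1$, let $F$ be an $n$-perturbation on $H^2(\mathbb{D})$ and $S_n = M_z + F$. If $f \in H^2(\mathbb{D})$ is a nonzero function, then the closed subspace $[f]_{S_n} = \overline{\{p(S_n) f : p \in \mathbb{C}[z]\}}$ contains a nonzero closed $M_z$-invariant subspace of $H^2(\mathbb{D})$.
   Context: $H^2(\mathbb{D})$ is the Hardy space on the open unit disc and $M_z$ the unilateral shift on it. All operators are bounded. A linear operator $F$ on $H^2(\mathbb{D})$ is an $n$-perturbation if (a) $Fz^m = 0$ for all $m \ge n$; (b) $F(z^m H^2(\mathbb{D})) \subseteq z^{m+1}\mathbb{C}[z]$ for all $m \ge 0$; and (c) $M_z + F$ is left-invertible. *)

(* H^2(D) is modelled by its coefficient space l^2(N; C): f = sum_k f_k z^k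
   corresponds to the sequence k |-> f_k. Under this unitary identification
   z^m is the unit vector e_m, M_z is the unilateral shift, C[z] is the set of
   finitely supported sequences and z^m H^2 is the set of l^2 sequences
   vanishing below index m. *)
From Stdlib Require Import Reals.
From Coquelicot Require Import Coquelicot.
Open Scope R_scope.

Definition seqC := nat -> C.

Definition H2 (x : seqC) : Prop := ex_series (fun k => (Cmod (x k)) ^ 2).

Definition H2norm (x : seqC) : R := sqrt (Series (fun k => (Cmod (x k)) ^ 2)).

Definition seq0 : seqC := fun _ => (RtoC 0).
Definition seq_add (x y : seqC) : seqC := fun k => Cplus (x k) (y k).
Definition seq_scal (a : C) (x : seqC) : seqC := fun k => Cmult a (x k).
Definition seq_sub (x y : seqC) : seqC := fun k => Cminus (x k) (y k).

Definition zpow (m : nat) : seqC := fun k => if Nat.eqb k m then (RtoC 1) else (RtoC 0).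

Definition Mz (x : seqC) : seqC :=
  fun k => match k with O => (RtoC 0) | S k' => x k' end.

Definition is_poly (x : seqC) : Prop := exists N, forall k, (N <= k)%nat -> x k = (RtoC 0).

Definition in_zmH2 (m : nat) (x : seqC) : Prop := H2 x /\ forall k, (k < m)%nat -> x k = (RtoC 0).

Definition in_zmCz (m : nat) (x : seqC) : Prop := is_poly x /\ forall k, (k < m)%nat -> x k = (RtoC 0).

Definition bounded_op (T : seqC -> seqC) : Prop :=
  (forall x, H2 x -> H2 (T x)) /\
  (forall a x y, H2 x -> H2 y -> T (seq_add (seq_scal a x) y) = seq_add (seq_scal a (T x)) (T y)) /\
  (exists M, forall x, H2 x -> H2norm (T x) <= M * H2norm x).

Definition op_add (T U : seqC -> seqC) : seqC -> seqC := fun x => seq_add (T x) (U x).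

Definition left_invertible (T : seqC -> seqC) : Prop :=
  exists L, bounded_op L /\ forall x, H2 x -> L (T x) = x.

Definition n_perturbation (n : nat) (F : seqC -> seqC) : Prop :=
  bounded_op F /\
  (forall m, (n <= m)%nat -> F (zpow m) = seq0) /\
  (forall m x, in_zmH2 m x -> in_zmCz (S m) (F x)) /\
  left_invertible (op_add Mz F).

(* p(T) f for p = c_0 + c_1 z + ... given as the coefficient list [c_0; c_1; ...]
   (Horner scheme: p(T) f = c_0 f + T (p'(T) f)) *)
Fixpoint poly_app (p : list C) (T : seqC -> seqC) (f : seqC) : seqC :=
  match p with
  | nil => seq0
  | cons c p' => seq_add (seq_scal c f) (T (poly_app p' T f))
  end.

Definition H2closure (A : seqC -> Prop) (x : seqC) : Prop :=
  H2 x /\ forall eps, 0 < eps -> exists y, A y /\ H2norm (seq_sub x y) < eps.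

Definition cyclic_subspace (T : seqC -> seqC) (f : seqC) : seqC -> Prop :=
  H2closure (fun y => exists p, y = poly_app p T f).

Definition closed_subspace (M : seqC -> Prop) : Prop :=
  (forall x, M x -> H2 x) /\ M seq0 /\
  (forall x y, M x -> M y -> M (seq_add x y)) /\
  (forall a x, M x -> M (seq_scal a x)) /\
  (forall x, H2closure M x -> M x).

(* On z^n H^2 the perturbation F vanishes: writing
   x = x_n z^n + ... + x_k z^k + t with t in z^(k+1) H^2, linearity and
   F z^j = 0 give F x = F t, whose coefficients vanish up to index k + 1.
   Hence S_n = M_z on z^n H^2, so M = [f]_{S_n} ∩ z^n H^2 is a closed
   M_z-invariant subspace of [f]_{S_n}. It is nonzero: S_n raises the order of
   vanishing at 0 by one and is injective (being left invertible), so S_n^n f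
   is a nonzero element of M. *)

From Stdlib Require Import Reals Lra Lia FunctionalExtensionality List.
From Coquelicot Require Import Coquelicot.
Open Scope R_scope.

Definition H2norm2 (x : seqC) : R := Series (fun k => Cmod (x k) ^ 2).

Ltac seq_ext := apply functional_extensionality; intro;
  unfold seq_add, seq_scal, seq_sub, seq0.

Lemma is_series_zero : is_series (fun _ : nat => 0) 0.
Proof.
  apply (filterlim_ext (fun _ => 0)); [|apply filterlim_const].
  intro n. rewrite sum_n_const. ring.
Qed.

Lemma ex_series_Rscal (c : R) (a : nat -> R) :
  ex_series a -> ex_series (fun k => c * a k).
Proof. apply (ex_series_scal_l (V := R_NormedModule) c a). Qed.

Lemma Series_ge0 (a : nat -> R) : (forall k, 0 <= a k) -> ex_series a -> 0 <= Series a.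
Proof.
  intros Ha Hex. rewrite <- (is_series_unique _ _ is_series_zero).
  apply Series_le; [intro k; specialize (Ha k); lra | exact Hex].
Qed.

Lemma Series_dominated (a b : nat -> R) :
  (forall k, 0 <= a k <= b k) -> ex_series b -> ex_series a /\ Series a <= Series b.
Proof.
  intros Hab Hb. split; [|exact (Series_le a b Hab Hb)].
  apply (ex_series_le a b); [|exact Hb].
  intro k. unfold norm; simpl; unfold abs; simpl.
  rewrite Rabs_pos_eq; apply Hab.
Qed.

Lemma H2norm2_ge0 x : H2 x -> 0 <= H2norm2 x.
Proof. apply Series_ge0. intro; apply pow2_ge_0. Qed.

Lemma H2norm_lt_iff x eps : 0 < eps -> H2norm x < eps <-> H2norm2 x < eps ^ 2.
Proof.
  intro He. unfold H2norm; fold (H2norm2 x).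
  destruct (Rle_or_lt 0 (H2norm2 x)) as [Hx | Hx].
  - rewrite <- (sqrt_pow2 eps) at 1 by lra.
    split; [apply sqrt_lt_0_alt | intro; apply sqrt_lt_1_alt; lra].
  - rewrite sqrt_neg_0 by lra. pose proof (pow_lt eps 2 He). split; lra.
Qed.

Lemma H2_dominated_scal (z u : seqC) (c : R) :
  0 <= c -> H2 u -> (forall k, Cmod (z k) <= c * Cmod (u k)) ->
  H2 z /\ H2norm2 z <= c ^ 2 * H2norm2 u.
Proof.
  intros Hc Hu Hzu. unfold H2, H2norm2. rewrite <- Series_scal_l.
  apply Series_dominated; [|apply ex_series_Rscal, Hu].
  intro k. specialize (Hzu k). pose proof (Cmod_ge_0 (z k)).
  split; [apply pow2_ge_0 | nra].
Qed.

Lemma H2_dominated_add (z u v : seqC) :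
  H2 u -> H2 v -> (forall k, Cmod (z k) <= Cmod (u k) + Cmod (v k)) ->
  H2 z /\ H2norm2 z <= 2 * H2norm2 u + 2 * H2norm2 v.
Proof.
  intros Hu Hv Hz. unfold H2, H2norm2.
  rewrite <- !Series_scal_l, <- Series_plus by (apply ex_series_Rscal; assumption).
  apply Series_dominated.
  - intro k. specialize (Hz k). pose proof (Cmod_ge_0 (z k)).
    pose proof (Cmod_ge_0 (u k)). pose proof (Cmod_ge_0 (v k)).
    pose proof (pow2_ge_0 (Cmod (u k) - Cmod (v k))).
    split; [apply pow2_ge_0 | nra].
  - apply (ex_series_plus (V := R_NormedModule)); apply ex_series_Rscal; assumption.
Qed.

Lemma H2_seq0 : H2 seq0.
Proof.
  exists 0. apply (is_series_ext (fun _ => 0)); [|exact is_series_zero].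
  intro; unfold seq0; rewrite Cmod_0; simpl; ring.
Qed.

Lemma H2norm2_seq0 : H2norm2 seq0 = 0.
Proof.
  rewrite <- (is_series_unique _ _ is_series_zero).
  apply Series_ext. intro; unfold seq0; rewrite Cmod_0; ring.
Qed.

Lemma H2_add x y : H2 x -> H2 y -> H2 (seq_add x y).
Proof. intros Hx Hy. apply (H2_dominated_add _ x y Hx Hy); intro; apply Cmod_triangle. Qed.

Lemma H2_scal a x : H2 x -> H2 (seq_scal a x).
Proof.
  intro Hx. apply (H2_dominated_scal _ x (Cmod a)); [apply Cmod_ge_0 | exact Hx |].
  intro; unfold seq_scal; rewrite Cmod_mult; lra.
Qed.

Lemma Cmod_sub_le a b : Cmod (a - b) <= Cmod a + Cmod b.
Proof. unfold Cminus. rewrite <- (Cmod_opp b). apply Cmod_triangle. Qed.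

Lemma H2_sub x y : H2 x -> H2 y -> H2 (seq_sub x y).
Proof. intros Hx Hy. apply (H2_dominated_add _ x y Hx Hy); intro; apply Cmod_sub_le. Qed.

Lemma H2norm2_sub_triangle x y z : H2 x -> H2 y -> H2 z ->
  H2norm2 (seq_sub x z) <= 2 * H2norm2 (seq_sub x y) + 2 * H2norm2 (seq_sub y z).
Proof.
  intros Hx Hy Hz. apply H2_dominated_add; [apply H2_sub; assumption.. |].
  intro k. unfold seq_sub.
  replace (x k - z k)%C with ((x k - y k) + (y k - z k))%C by ring.
  apply Cmod_triangle.
Qed.

Lemma H2_zpow m : H2 (zpow m).
Proof.
  apply (ex_series_incr_n _ (S m)).
  apply (ex_series_ext (fun _ => 0)); [|exists 0; exact is_series_zero].
  intro k. unfold zpow. replace (Nat.eqb (S m + k) m) with false.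
  - rewrite Cmod_0; simpl; ring.
  - symmetry; apply Nat.eqb_neq; lia.
Qed.

Lemma Cmod_coef_sq_le x k : H2 x -> Cmod (x k) ^ 2 <= H2norm2 x.
Proof.
  intro Hx. unfold H2norm2. rewrite (Series_incr_n _ (S k)) by (lia || exact Hx).
  assert (Htail : 0 <= Series (fun i => Cmod (x (S k + i)%nat) ^ 2)).
  { apply Series_ge0; [intro; apply pow2_ge_0|].
    apply (ex_series_incr_n (fun i => Cmod (x i) ^ 2)), Hx. }
  simpl pred. destruct k as [|k]; [simpl sum_f_R0; lra|].
  rewrite tech5.
  pose proof (cond_pos_sum (fun i => Cmod (x i) ^ 2) k (fun i => pow2_ge_0 _)). lra.
Qed.

Lemma H2_Mz x : H2 x -> H2 (Mz x).
Proof. intro Hx. apply ex_series_incr_1. exact Hx. Qed.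

Lemma H2norm2_Mz x : H2norm2 (Mz x) = H2norm2 x.
Proof.
  unfold H2norm2. rewrite Series_incr_1_aux; [reflexivity | simpl; rewrite Cmod_0; ring].
Qed.

Section BoundedOperator.
Variable T : seqC -> seqC.
Hypothesis hT : bounded_op T.

Lemma bounded_op_seq0 : T seq0 = seq0.
Proof.
  destruct hT as [_ [Hlin _]].
  assert (E : seq_add (seq_scal (-1) seq0) seq0 = seq0) by (seq_ext; ring).
  pose proof (Hlin (-1)%C seq0 seq0 H2_seq0 H2_seq0) as H. rewrite E in H.
  rewrite H. seq_ext. ring.
Qed.

Lemma bounded_op_add x y : H2 x -> H2 y -> T (seq_add x y) = seq_add (T x) (T y).
Proof.
  intros Hx Hy. destruct hT as [_ [Hlin _]].
  replace (seq_add x y) with (seq_add (seq_scal 1 x) y) by (seq_ext; ring).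
  rewrite Hlin by assumption. seq_ext. ring.
Qed.

Lemma bounded_op_scal a x : H2 x -> T (seq_scal a x) = seq_scal a (T x).
Proof.
  intro Hx. destruct hT as [_ [Hlin _]].
  replace (seq_scal a x) with (seq_add (seq_scal a x) seq0) by (seq_ext; ring).
  rewrite Hlin, bounded_op_seq0 by (assumption || exact H2_seq0). seq_ext. ring.
Qed.

Lemma bounded_op_sub x y : H2 x -> H2 y -> T (seq_sub x y) = seq_sub (T x) (T y).
Proof.
  intros Hx Hy. destruct hT as [_ [Hlin _]].
  replace (seq_sub x y) with (seq_add (seq_scal (-1) y) x) by (seq_ext; ring).
  rewrite Hlin by assumption. seq_ext. ring.
Qed.

Lemma bounded_op_sq_bound :
  exists K, 0 <= K /\ forall x, H2 x -> H2norm2 (T x) <= K * H2norm2 x.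
Proof.
  destruct hT as [HH2 [_ [M HM]]]. exists (M ^ 2). split; [apply pow2_ge_0|].
  intros x Hx. specialize (HM x Hx). unfold H2norm in HM.
  fold (H2norm2 x) (H2norm2 (T x)) in HM.
  pose proof (H2norm2_ge0 x Hx) as Hx0. pose proof (H2norm2_ge0 _ (HH2 x Hx)) as HTx0.
  rewrite <- (pow2_sqrt (H2norm2 x)), <- (pow2_sqrt (H2norm2 (T x))) by assumption.
  pose proof (sqrt_pos (H2norm2 x)). pose proof (sqrt_pos (H2norm2 (T x))).
  nra.
Qed.

End BoundedOperator.

Lemma H2norm_bound_of_sq (T : seqC -> seqC) (K : R) : 0 <= K ->
  (forall x, H2 x -> H2norm2 (T x) <= K * H2norm2 x) ->
  forall x, H2 x -> H2norm (T x) <= sqrt K * H2norm x.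
Proof.
  intros HK HT x Hx. unfold H2norm. fold (H2norm2 x) (H2norm2 (T x)).
  rewrite <- sqrt_mult by (auto using H2norm2_ge0).
  apply sqrt_le_1_alt, HT, Hx.
Qed.

Lemma bounded_op_Mz : bounded_op Mz.
Proof.
  split; [exact H2_Mz|]. split.
  - intros a x y _ _. apply functional_extensionality.
    intros [|k]; unfold Mz, seq_add, seq_scal; ring.
  - exists (sqrt 1). apply (H2norm_bound_of_sq Mz 1); [lra|].
    intros x _. rewrite H2norm2_Mz. lra.
Qed.

Lemma bounded_op_seq_scal a : bounded_op (seq_scal a).
Proof.
  split; [exact (H2_scal a)|]. split.
  - intros b x y _ _. seq_ext. ring.
  - exists (sqrt (Cmod a ^ 2)). apply H2norm_bound_of_sq; [apply pow2_ge_0|].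
    intros x Hx. apply (H2_dominated_scal _ x (Cmod a)); [apply Cmod_ge_0 | exact Hx |].
    intro; unfold seq_scal; rewrite Cmod_mult; lra.
Qed.

Lemma bounded_op_op_add T U : bounded_op T -> bounded_op U -> bounded_op (op_add T U).
Proof.
  intros hT hU. unfold op_add. split; [|split].
  - intros x Hx. apply H2_add; [apply hT | apply hU]; exact Hx.
  - intros a x y Hx Hy. destruct hT as [_ [HlinT _]]. destruct hU as [_ [HlinU _]].
    rewrite HlinT, HlinU by assumption. seq_ext. ring.
  - destruct (bounded_op_sq_bound T hT) as [K [HK HTK]].
    destruct (bounded_op_sq_bound U hU) as [L [HL HUL]].
    exists (sqrt (2 * K + 2 * L)). apply H2norm_bound_of_sq; [lra|].
    intros x Hx. specialize (HTK x Hx). specialize (HUL x Hx).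
    destruct (H2_dominated_add (seq_add (T x) (U x)) (T x) (U x)) as [_ Hb];
      [apply hT, Hx | apply hU, Hx | intro; apply Cmod_triangle |].
    lra.
Qed.

Lemma left_invertible_injective T x :
  left_invertible T -> H2 x -> T x = seq0 -> x = seq0.
Proof.
  intros [L [HL HLT]] Hx HTx. rewrite <- (HLT x Hx), HTx. apply bounded_op_seq0, HL.
Qed.

Lemma H2closure_sq A x : H2closure A x <->
  H2 x /\ forall d, 0 < d -> exists y, A y /\ H2norm2 (seq_sub x y) < d.
Proof.
  split; intros [Hx Happ]; split; auto; intros d Hd.
  - destruct (Happ (sqrt d) (sqrt_lt_R0 d Hd)) as [y [Ay Hy]].
    exists y. split; [exact Ay|].
    apply H2norm_lt_iff in Hy; [|apply sqrt_lt_R0, Hd].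
    rewrite pow2_sqrt in Hy by lra. exact Hy.
  - destruct (Happ (d ^ 2) (pow_lt d 2 Hd)) as [y [Ay Hy]].
    exists y. split; [exact Ay | apply H2norm_lt_iff; assumption].
Qed.

Lemma H2closure_mono (A B : seqC -> Prop) x :
  (forall y, A y -> B y) -> H2closure A x -> H2closure B x.
Proof.
  intros HAB [Hx Happ]. split; [exact Hx|]. intros eps He.
  destruct (Happ eps He) as [y [Ay Hy]]. exists y. auto.
Qed.

Section Closure.
Variable A : seqC -> Prop.
Hypothesis hA : forall y, A y -> H2 y.

Lemma H2closure_incl x : A x -> H2closure A x.
Proof.
  intro Ax. apply H2closure_sq. split; [apply hA, Ax|]. intros d Hd.
  exists x. split; [exact Ax|].
  replace (seq_sub x x) with seq0 by (seq_ext; ring). rewrite H2norm2_seq0. exact Hd.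
Qed.

Lemma H2closure_idem x : H2closure (H2closure A) x -> H2closure A x.
Proof.
  intro Hx. apply H2closure_sq in Hx as [Hx Happ].
  apply H2closure_sq. split; [exact Hx|]. intros d Hd.
  destruct (Happ (d / 4)) as [y [Hy Hxy]]; [lra|].
  pose proof (proj1 Hy) as Hy2. apply H2closure_sq in Hy as [_ Happy].
  destruct (Happy (d / 4)) as [z [Az Hyz]]; [lra|].
  exists z. split; [exact Az|].
  pose proof (H2norm2_sub_triangle x y z Hx Hy2 (hA z Az)). lra.
Qed.

Lemma H2closure_add x y :
  (forall u v, A u -> A v -> A (seq_add u v)) ->
  H2closure A x -> H2closure A y -> H2closure A (seq_add x y).
Proof.
  intros Hadd Hx Hy. apply H2closure_sq in Hx as [Hx Happx], Hy as [Hy Happy].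
  apply H2closure_sq. split; [apply H2_add; assumption|]. intros d Hd.
  destruct (Happx (d / 4)) as [u [Au Hxu]]; [lra|].
  destruct (Happy (d / 4)) as [v [Av Hyv]]; [lra|].
  exists (seq_add u v). split; [apply Hadd; assumption|].
  destruct (H2_dominated_add (seq_sub (seq_add x y) (seq_add u v)) (seq_sub x u) (seq_sub y v))
    as [_ Hb]; [apply H2_sub; auto | apply H2_sub; auto | |].
  { intro k. unfold seq_sub, seq_add.
    replace (x k + y k - (u k + v k))%C with ((x k - u k) + (y k - v k))%C by ring.
    apply Cmod_triangle. }
  lra.
Qed.

Lemma H2closure_op T x : bounded_op T -> (forall y, A y -> A (T y)) ->
  H2closure A x -> H2closure A (T x).
Proof.
  intros hT HAT Hx. apply H2closure_sq in Hx as [Hx Happ].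
  apply H2closure_sq. split; [apply hT, Hx|]. intros d Hd.
  destruct (bounded_op_sq_bound T hT) as [K [HK HTK]].
  destruct (Happ (d / (K + 1))) as [y [Ay Hxy]]; [apply Rdiv_lt_0_compat; lra|].
  exists (T y). split; [apply HAT, Ay|].
  assert (Hxy2 : H2 (seq_sub x y)) by (apply H2_sub; auto).
  rewrite <- bounded_op_sub by auto.
  pose proof (HTK _ Hxy2). pose proof (H2norm2_ge0 _ Hxy2).
  assert (Hlt : (K + 1) * H2norm2 (seq_sub x y) < d).
  { apply (Rmult_lt_compat_l (K + 1)) in Hxy; [|lra].
    replace ((K + 1) * (d / (K + 1))) with d in Hxy by (field; lra). exact Hxy. }
  nra.
Qed.

Lemma closed_subspace_H2closure :
  A seq0 -> (forall u v, A u -> A v -> A (seq_add u v)) ->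
  (forall a u, A u -> A (seq_scal a u)) -> closed_subspace (H2closure A).
Proof.
  intros H0 Hadd Hscal. split; [|split; [|split; [|split]]].
  - intros x [Hx _]. exact Hx.
  - apply H2closure_incl, H0.
  - intros x y. apply H2closure_add, Hadd.
  - intros a x. apply H2closure_op; [apply bounded_op_seq_scal | apply Hscal].
  - apply H2closure_idem.
Qed.

End Closure.

Lemma closed_subspace_inter (M1 M2 : seqC -> Prop) :
  closed_subspace M1 -> closed_subspace M2 -> closed_subspace (fun x => M1 x /\ M2 x).
Proof.
  intros [H1 [Z1 [A1 [S1 C1]]]] [H2' [Z2 [A2 [S2 C2]]]].
  split; [|split; [|split; [|split]]].
  - intros x [Hx _]. apply H1, Hx.
  - split; assumption.
  - intros x y [] []. split; auto.
  - intros a x []. split; auto.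
  - intros x Hx. split; [apply C1 | apply C2]; revert Hx; apply H2closure_mono; tauto.
Qed.

Lemma closed_subspace_zmH2 m : closed_subspace (in_zmH2 m).
Proof.
  split; [|split; [|split; [|split]]].
  - intros x [Hx _]. exact Hx.
  - split; [exact H2_seq0 | reflexivity].
  - intros x y [Hx Zx] [Hy Zy]. split; [apply H2_add; assumption|].
    intros k Hk. unfold seq_add. rewrite Zx, Zy by assumption. ring.
  - intros a x [Hx Zx]. split; [apply H2_scal, Hx|].
    intros k Hk. unfold seq_scal. rewrite Zx by assumption. ring.
  - intros x Hcl. apply H2closure_sq in Hcl as [Hx Happ]. split; [exact Hx|].
    intros k Hk. destruct (Ceq_dec (x k) 0) as [E | E]; [exact E | exfalso].
    apply Cmod_gt_0 in E. pose proof (pow_lt _ 2 E) as Hpos.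
    destruct (Happ _ Hpos) as [y [[Hy Zy] Hxy]].
    pose proof (Cmod_coef_sq_le (seq_sub x y) k (H2_sub x y Hx Hy)) as Hk'.
    unfold seq_sub at 1 in Hk'. rewrite Zy in Hk' by assumption.
    replace (x k - 0)%C with (x k) in Hk' by ring. lra.
Qed.

Fixpoint poly_add (p q : list C) : list C :=
  match p, q with
  | nil, q => q
  | p, nil => p
  | c :: p', d :: q' => (c + d)%C :: poly_add p' q'
  end.

Definition poly_orbit (T : seqC -> seqC) (f : seqC) (y : seqC) : Prop :=
  exists p, y = poly_app p T f.

Section PolynomialOrbit.
Variables (T : seqC -> seqC) (f : seqC).
Hypotheses (hT : bounded_op T) (hf : H2 f).

Lemma poly_app_H2 p : H2 (poly_app p T f).
Proof.
  induction p as [|c p IH]; simpl; [exact H2_seq0|].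
  apply H2_add; [apply H2_scal, hf | apply hT, IH].
Qed.

Lemma poly_app_add p q :
  poly_app (poly_add p q) T f = seq_add (poly_app p T f) (poly_app q T f).
Proof.
  revert q. induction p as [|c p IH]; intros [|d q]; simpl; try (seq_ext; ring).
  rewrite IH, bounded_op_add by (auto using poly_app_H2). seq_ext. ring.
Qed.

Lemma poly_app_scal a p : poly_app (map (Cmult a) p) T f = seq_scal a (poly_app p T f).
Proof.
  induction p as [|c p IH]; simpl; [seq_ext; ring|].
  rewrite IH, bounded_op_scal by (auto using poly_app_H2). seq_ext. ring.
Qed.

Lemma poly_app_shift (p : list C) : poly_app (RtoC 0 :: p) T f = T (poly_app p T f).
Proof. simpl. seq_ext. ring. Qed.

Lemma poly_orbit_op y : poly_orbit T f y -> poly_orbit T f (T y).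
Proof. intros [p ->]. exists (RtoC 0 :: p). symmetry. apply poly_app_shift. Qed.

Lemma poly_orbit_iter j : poly_orbit T f (Nat.iter j T f).
Proof.
  induction j as [|j IH]; simpl; [|apply poly_orbit_op, IH].
  exists (RtoC 1 :: nil). simpl. rewrite (bounded_op_seq0 T hT). seq_ext. ring.
Qed.

Lemma closed_subspace_cyclic : closed_subspace (cyclic_subspace T f).
Proof.
  apply closed_subspace_H2closure.
  - intros y [p ->]. apply poly_app_H2.
  - exists nil. reflexivity.
  - intros u v [p ->] [q ->]. exists (poly_add p q). symmetry. apply poly_app_add.
  - intros a u [p ->]. exists (map (Cmult a) p). symmetry. apply poly_app_scal.
Qed.

Lemma cyclic_subspace_op x : cyclic_subspace T f x -> cyclic_subspace T f (T x).
Proof.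
  apply H2closure_op; [intros y [p ->]; apply poly_app_H2 | exact hT | apply poly_orbit_op].
Qed.

Lemma cyclic_subspace_iter j : cyclic_subspace T f (Nat.iter j T f).
Proof.
  apply H2closure_incl; [intros y [p ->]; apply poly_app_H2 | apply poly_orbit_iter].
Qed.

End PolynomialOrbit.

Lemma in_zmH2_peel j y : in_zmH2 j y ->
  exists y', in_zmH2 (S j) y' /\ y = seq_add (seq_scal (y j) (zpow j)) y'.
Proof.
  intros [Hy Zy]. exists (fun k => if Nat.eqb k j then RtoC 0 else y k). split; [split|].
  - apply (H2_dominated_scal _ y 1); [lra | exact Hy |].
    intro k. destruct (Nat.eqb k j); [rewrite Cmod_0; pose proof (Cmod_ge_0 (y k)) | ]; lra.
  - intros k Hk. destruct (Nat.eqb k j) eqn:E; [reflexivity|].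
    apply Nat.eqb_neq in E. apply Zy. lia.
  - seq_ext. unfold zpow. destruct (Nat.eqb _ j) eqn:E; [apply Nat.eqb_eq in E; subst|]; ring.
Qed.

Lemma in_zmH2_le m m' x : (m <= m')%nat -> in_zmH2 m' x -> in_zmH2 m x.
Proof. intros Hm [Hx Zx]. split; [exact Hx | intros k Hk; apply Zx; lia]. Qed.

Section Perturbation.
Variables (n : nat) (F : seqC -> seqC).
Hypothesis hF : n_perturbation n F.

Lemma perturbation_bounded : bounded_op (op_add Mz F).
Proof. apply bounded_op_op_add; [exact bounded_op_Mz | apply hF]. Qed.

Lemma perturbation_coef_vanishes d : forall j y, (n <= j)%nat -> in_zmH2 j y ->
  forall k, (k <= j + d)%nat -> F y k = RtoC 0.
Proof.
  destruct hF as [[_ [Hlin _]] [Hpow [Htri _]]].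
  induction d as [|d IH]; intros j y Hj Hy k Hk.
  - apply (Htri j y Hy). lia.
  - destruct (in_zmH2_peel j y Hy) as [y' [Hy' ->]].
    rewrite Hlin, Hpow by (apply H2_zpow || apply Hy' || assumption).
    unfold seq_add, seq_scal, seq0. rewrite (IH (S j) y') by (assumption || lia). ring.
Qed.

Lemma perturbation_vanishes x : in_zmH2 n x -> F x = seq0.
Proof.
  intro Hx. apply functional_extensionality. intro k.
  apply (perturbation_coef_vanishes k n); [lia | exact Hx | lia].
Qed.

Lemma perturbation_raises_order m x : in_zmH2 m x -> in_zmH2 (S m) (op_add Mz F x).
Proof.
  intros Hx. split; [apply perturbation_bounded, Hx|].
  destruct hF as [_ [_ [Htri _]]]. destruct (Htri m x Hx) as [_ HFx].
  intros k Hk. unfold op_add, seq_add. rewrite HFx by exact Hk.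
  destruct k as [|k]; simpl; [ring|]. rewrite (proj2 Hx) by lia. ring.
Qed.

Lemma perturbation_iter_nonzero f : H2 f -> f <> seq0 -> forall j,
  in_zmH2 j (Nat.iter j (op_add Mz F) f) /\ Nat.iter j (op_add Mz F) f <> seq0.
Proof.
  intros Hf Hf0 j. pose proof hF as [_ [_ [_ HS]]].
  induction j as [|j [IHz IH0]]; simpl.
  - split; [split; [exact Hf | intros; lia] | exact Hf0].
  - split; [apply perturbation_raises_order, IHz|].
    intro E. apply IH0, (left_invertible_injective _ _ HS); [apply IHz | exact E].
Qed.

End Perturbation.

Theorem lemma2p4 (n : nat) (hn : (1 <= n)%nat) (F : seqC -> seqC)
  (hF : n_perturbation n F) (f : seqC) (hf : H2 f) (hf0 : f <> seq0) :
  exists M : seqC -> Prop,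
    closed_subspace M /\
    (exists x, M x /\ x <> seq0) /\
    (forall x, M x -> M (Mz x)) /\
    (forall x, M x -> cyclic_subspace (op_add Mz F) f x).
Proof.
  pose proof (perturbation_bounded n F hF) as hS.
  exists (fun x => cyclic_subspace (op_add Mz F) f x /\ in_zmH2 n x).
  split; [|split; [|split]].
  - apply closed_subspace_inter;
      [apply closed_subspace_cyclic; assumption | apply closed_subspace_zmH2].
  - exists (Nat.iter n (op_add Mz F) f).
    destruct (perturbation_iter_nonzero n F hF f hf hf0 n) as [Hz H0].
    split; [split; [apply cyclic_subspace_iter; assumption | exact Hz] | exact H0].
  - intros x [Hx Zx].
    assert (E : Mz x = op_add Mz F x).
    { unfold op_add. rewrite (perturbation_vanishes n F hF x Zx). seq_ext. ring. }
    rewrite E. split; [apply cyclic_subspace_op; assumption|].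
    apply (in_zmH2_le n (S n)); [lia|].
    apply (perturbation_raises_order n F hF); assumption.
  - intros x [Hx _]. exact Hx.
Qed.
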